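(* Let $R$ be a commutative ring with identity $1\neq 0$. Then $R$ is semi-complemented if and only if $R$ satisfies Property $D$ or $R$ is complemented.
   Context: $\mathfrak{N}(R)$ denotes the nilradical of $R$ and $\mathrm{reg}(R)$ the set of regular elements (non-zero-divisors) of $R$. An element $a\in R$ is complemented if there is $b\in R$ with $ab=0$ and $a+b\in\mathrm{reg}(R)$; $R$ is complemented if every element is complemented. $R$ is semi-complemented if every element of $R\setminus\mathfrak{N}(R)$ is complemented. $R$ satisfies Property $D$ if $R\setminus\mathfrak{N}(R)=\mathrm{reg}(R)$. *)

From mathcomp Require Import all_boot all_algebra.
Set Implicit Arguments. Unset Strict Implicit. Unset Printing Implicit Defensive.
Import GRing.Theory.
Local Open Scope ring_scope.

Definition in_nilradical (R : comNzRingType) (a : R) : Prop :=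
  exists n : nat, a ^+ n = 0.

Definition regular (R : comNzRingType) (a : R) : Prop :=
  forall b : R, a * b = 0 -> b = 0.

Definition complemented_elt (R : comNzRingType) (a : R) : Prop :=
  exists b : R, a * b = 0 /\ regular (a + b).

Definition complemented (R : comNzRingType) : Prop :=
  forall a : R, complemented_elt a.

Definition semi_complemented (R : comNzRingType) : Prop :=
  forall a : R, ~ in_nilradical a -> complemented_elt a.

Definition property_D (R : comNzRingType) : Prop :=
  forall a : R, ~ in_nilradical a <-> regular a.

(** If R fails Property D, pick a non-nilpotent zero-divisor a and a
    complement b of it; b is not nilpotent either, since a + b is regular.
    For x with x^2 = 0, a + x is not nilpotent, and testing a complement d of
    a + x against the regular element a + x + d shows that every annihilator
    of a (in particular b) kills x; symmetrically a kills x, so the regular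
    element a + b kills x and x = 0.  Hence R is reduced, its only nilpotent 0
    is complemented by 1, and R is complemented. *)

From mathcomp Require Import all_boot all_algebra.
From mathcomp Require Import zify ring.
From Stdlib Require Import Classical.
Set Implicit Arguments. Unset Strict Implicit. Unset Printing Implicit Defensive.
Import GRing.Theory.
Local Open Scope ring_scope.

Section Nilradical.
Variable R : comNzRingType.
Implicit Types r u v x : R.

Lemma regularP r : regular r <-> GRing.lreg r.
Proof.
split=> [reg_r y z /eqP| lreg_r y ry0]; last by apply: lreg_r; rewrite mulr0.
by rewrite -subr_eq0 -mulrBr => /eqP/reg_r/eqP; rewrite subr_eq0 => /eqP.
Qed.

Lemma regularX r n : regular r -> regular (r ^+ n).
Proof. by move/regularP/(lregX (n := n))/regularP. Qed.

Lemma nilpotent_not_regular u : in_nilradical u -> ~ regular u.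
Proof.
move=> [n un0] /regularP/(lregX (n := n))/lreg_neq0.
by rewrite un0 eqxx.
Qed.

Lemma nilpotentN u : in_nilradical u -> in_nilradical (- u).
Proof. by move=> [n un0]; exists n; rewrite exprNn un0 mulr0. Qed.

Lemma nilpotentD u v : in_nilradical u -> in_nilradical v -> in_nilradical (u + v).
Proof.
move=> [n un0] [m vm0]; exists (n + m)%N; rewrite exprDn big1 // => i _.
have [le_mi|lt_im] := leqP m i.
  by rewrite -(subnKC le_mi) exprD vm0 mul0r mulr0 mul0rn.
have le_n : (n <= n + m - i)%N by lia.
by rewrite -(subnKC le_n) exprD un0 !mul0r mul0rn.
Qed.

Lemma regularD_nilpotent r u : regular r -> in_nilradical u -> regular (r + u).
Proof.
move=> reg_r [k uk0] y ruy0; apply: (regularX (n := k) reg_r).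
have -> : r ^+ k = r ^+ k - (- u) ^+ k by rewrite exprNn uk0 mulr0 subr0.
by rewrite subrXX opprK mulrAC ruy0 mul0r.
Qed.

Lemma nilpotent_eq0_of_sqr_eq0 :
  (forall x, x * x = 0 -> x = 0) -> forall u, in_nilradical u -> u = 0.
Proof.
move=> sqr_eq0 u [n]; case: n => [/eqP|n]; first by rewrite expr0 oner_eq0.
elim: n => [|n IHn] unS0; first by rewrite expr1 in unS0.
apply/IHn/sqr_eq0; rewrite -exprD (_ : n.+1 + n.+1 = n.+2 + n)%N; last lia.
by rewrite exprD unS0 mul0r.
Qed.

Lemma not_property_D_witness :
  ~ property_D R -> exists2 a : R, ~ in_nilradical a & ~ regular a.
Proof.
move=> notD; apply: NNPP => no_witness; apply: notD => a; split.
  by move=> a_nnil; apply: NNPP => a_nreg; apply: no_witness; exists a.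
by move=> reg_a /nilpotent_not_regular.
Qed.

Lemma property_D_semi_complemented :
  property_D R -> semi_complemented R.
Proof. by move=> D a /D reg_a; exists 0; rewrite mulr0 addr0. Qed.

End Nilradical.

Section SemiComplemented.
Variable R : comNzRingType.
Hypothesis semi : semi_complemented R.

Lemma reduced_complemented :
  (forall u : R, in_nilradical u -> u = 0) -> complemented R.
Proof.
move=> nil_eq0 a; have [/nil_eq0 ->|a_nnil] := classic (in_nilradical a).
  by exists 1; rewrite mul0r add0r; split=> // y; rewrite mul1r.
exact: semi.
Qed.

Lemma annihilator_mul_sqr_eq0 (a b x : R) :
  ~ in_nilradical a -> a * b = 0 -> x * x = 0 -> b * x = 0.
Proof.
move=> a_nnil ab0 xx0.
have ax_nnil : ~ in_nilradical (a + x).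
  have x_nil : in_nilradical x by exists 2%N; rewrite expr2.
  by move=> /nilpotentD/(_ (nilpotentN x_nil)); rewrite addrK.
have [d [axd0 reg_axd]] := semi ax_nnil.
apply: reg_axd.
have -> : (a + x + d) * (b * x) =
    a * b * (x - d) + b * (x * x) + b * ((a + x) * d) by ring.
by rewrite ab0 xx0 axd0 !mul0r !mulr0 !addr0.
Qed.

Lemma not_property_D_sqr_eq0 :
  ~ property_D R -> forall x : R, x * x = 0 -> x = 0.
Proof.
move=> /not_property_D_witness[a a_nnil a_nreg] x xx0.
have [b [ab0 reg_ab]] := semi a_nnil.
have b_nnil : ~ in_nilradical b.
  move=> /nilpotentN nb_nil; apply: a_nreg.
  by have := regularD_nilpotent reg_ab nb_nil; rewrite addrK.
apply: reg_ab; rewrite mulrDl (annihilator_mul_sqr_eq0 a_nnil ab0 xx0).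
by rewrite (annihilator_mul_sqr_eq0 b_nnil _ xx0) ?addr0 // mulrC.
Qed.

End SemiComplemented.

Theorem mainTheorem1 (R : comNzRingType) :
  semi_complemented R <-> (property_D R \/ complemented R).
Proof.
split=> [semi | [/property_D_semi_complemented // | compl a _]]; last exact: compl.
have [D | notD] := classic (property_D R); [by left | right].
apply: (reduced_complemented semi).
exact/nilpotent_eq0_of_sqr_eq0/not_property_D_sqr_eq0.
Qed.
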